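(* Let $n_{0},k_{0},\Delta,\delta$ be nonnegative integers and define $$C_i=\binom{n_{0}+i\Delta}{k_0+i\delta},\qquad i=0,1,2,\ldots.$$ If $\Delta>\delta>0$ and $-1\leq k_0-(n_0+1)\delta/\Delta\leq0$, then the sequence $\{C_i\}_{i\geq0}$ is infinitely log-monotonic.
   Context: For a sequence $\{z_n\}$ of positive numbers, define the operator $R\{z_n\}=\{z_{n+1}/z_n\}$. A sequence of positive numbers $\{x_n\}$ is log-convex if $x_{n-1}x_{n+1}\ge x_n^2$ and log-concave if $x_{n-1}x_{n+1}\le x_n^2$, for all indices where these terms are defined. A sequence $\{z_n\}$ is log-monotonic of order $k$ if for every odd $r\le k-1$ the sequence $R^r\{z_n\}$ is log-concave and for every even $r\le k-1$ (including $r=0$) the sequence $R^r\{z_n\}$ is log-convex. It is infinitely log-monotonic if it is log-monotonic of order $k$ for every integer $k\ge0$. *)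

From HB Require Import structures.
From mathcomp Require Import all_boot all_order all_algebra.
From mathcomp Require Import reals.
Set Implicit Arguments. Unset Strict Implicit. Unset Printing Implicit Defensive.
Import Order.TTheory GRing.Theory Num.Theory.
Local Open Scope ring_scope.

Definition ratio_op (R : realType) (z : nat -> R) : nat -> R :=
  fun n => z n.+1 / z n.

Definition ratio_iter (R : realType) (r : nat) (z : nat -> R) : nat -> R :=
  iter r (@ratio_op R) z.

Definition positive_seq (R : realType) (x : nat -> R) : Prop :=
  forall n, 0 < x n.

(* x_{n-1} x_{n+1} >= x_n^2 for all n >= 1, written with shifted index *)
Definition log_convex (R : realType) (x : nat -> R) : Prop :=
  forall n, x n.+1 ^+ 2 <= x n * x n.+2.

Definition log_concave (R : realType) (x : nat -> R) : Prop :=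
  forall n, x n * x n.+2 <= x n.+1 ^+ 2.

Definition log_monotonic_of_order (R : realType) (k : nat) (z : nat -> R) : Prop :=
  forall r : nat, (r < k)%N ->
    (odd r -> log_concave (ratio_iter r z)) /\
    (~~ odd r -> log_convex (ratio_iter r z)).

Definition infinitely_log_monotonic (R : realType) (z : nat -> R) : Prop :=
  forall k : nat, log_monotonic_of_order k z.

(* Let [L i = ln C_i].  The logarithm turns the ratio operator into the forward
   difference [Δ], so [R^r C] is log-convex (log-concave) when [Δ^(r+2) L] is
   nonnegative (nonpositive), and it suffices to show [(-1)^r Δ^(r+2) L >= 0].
   The ratio [C_(i+1) / C_i] is a product of [Δ] factors linear in [i] divided by
   a product of [Δ] such factors; after rescaling, [Δ L i] is a constant plus
   [Σ_(x in U) ln (x/D + i) - Σ_(x in V) ln (x/D + i)] for two lists [U], [V] of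
   equal length.  For fixed [r], [a |-> (-1)^r Δ^(r+1) ln (a + i)] is decreasing,
   its derivative being [-(r+1)! / Π_k (a + i + k)]; hence the sum over [U]
   dominates the sum over [V] as soon as every threshold [t] bounds at least as
   many points of [U] as of [V].  This counting condition is where the hypothesis
   [-1 <= k0 - (n0+1) δ/Δ <= 0] is used. *)

From HB Require Import structures.
From mathcomp Require Import all_boot all_order all_algebra.
From mathcomp Require Import reals normedtype derive realfun exp.
From mathcomp Require Import ring lra zify.
Set Implicit Arguments. Unset Strict Implicit. Unset Printing Implicit Defensive.
Import Order.TTheory GRing.Theory Num.Theory.
Import numFieldNormedType.Exports.
Local Open Scope ring_scope.

Section ForwardDifference.
Variable R : realType.
Implicit Types (f g : nat -> R) (c : R).

Definition forward_diff f : nat -> R := fun n => f n.+1 - f n.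
Definition fdiff (r : nat) f : nat -> R := iter r forward_diff f.

Lemma fdiffS r f n : fdiff r.+1 f n = fdiff r f n.+1 - fdiff r f n.
Proof. by []. Qed.

Lemma fdiffSr r f : fdiff r.+1 f = fdiff r (forward_diff f).
Proof. exact: iterSr. Qed.

Lemma eq_fdiff r f g : f =1 g -> fdiff r f =1 fdiff r g.
Proof. by move=> fg; elim: r => [|r IH] n //; rewrite !fdiffS !IH. Qed.

Lemma fdiffB r f g n : fdiff r (fun i => f i - g i) n = fdiff r f n - fdiff r g n.
Proof. by elim: r n => [|r IH] n //; rewrite !fdiffS !IH; lra. Qed.

Lemma fdiff_sum r (I : Type) (s : seq I) (F : I -> nat -> R) n :
  fdiff r (fun i => \sum_(x <- s) F x i) n = \sum_(x <- s) fdiff r (F x) n.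
Proof. by elim: r n => [|r IH] n //; rewrite fdiffS !IH -sumrB. Qed.

Lemma fdiff_cstD r c f n : fdiff r.+1 (fun i => c + f i) n = fdiff r.+1 f n.
Proof.
by rewrite !fdiffSr; apply: eq_fdiff => i; rewrite /forward_diff; lra.
Qed.

Lemma fdiff_inv_shift r n (y : R) : 0 < y ->
  fdiff r (fun i => (y + i%:R)^-1) n =
  (-1) ^+ r * r`!%:R / \prod_(k < r.+1) (y + (n + k)%:R).
Proof.
move=> y_gt0; elim: r n => [|r IH] n.
  by rewrite /fdiff /= expr0 mul1r big_ord_recl big_ord0 mulr1 addn0 fact0 mul1r.
have pos m k : 0 < y + (m + k)%:R by rewrite ltr_wpDr.
have P_neq0 m : \prod_(k < r.+1) (y + (m + k)%:R) != 0.
  by rewrite prodf_seq_neq0; apply/allP => k _; rewrite gt_eqF.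
set a := \prod_(k < r.+1) (y + (n.+1 + k)%:R).
set b := \prod_(k < r.+1) (y + (n + k)%:R).
set Q := \prod_(k < r.+2) (y + (n + k)%:R).
have Q_first : Q = (y + n%:R) * a.
  by rewrite /Q big_ord_recl addn0; congr (_ * _); apply: eq_bigr => k _; rewrite addSnnS.
have Q_last : Q = b * (y + (n + r.+1)%:R) by rewrite /Q big_ord_recr.
have Q_neq0 : Q != 0 by rewrite Q_last mulf_neq0 ?P_neq0 ?gt_eqF.
have inv_a : a^-1 = (y + n%:R) / Q.
  by rewrite Q_first invfM mulrA divff ?mul1r // gt_eqF // -[n]addn0 pos.
have inv_b : b^-1 = (y + (n + r.+1)%:R) / Q.
  by rewrite Q_last invfM mulrCA divff ?mulr1 // gt_eqF.
rewrite fdiffS !IH -/a -/b inv_a inv_b exprS factS natrM !natrD.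
by field.
Qed.

Lemma is_derive_fdiff_ln_shift r n (w : R) : 0 < w ->
  is_derive w 1 (fun v => fdiff r (fun i => ln (v + i%:R)) n)
    (fdiff r (fun i => (w + i%:R)^-1) n).
Proof.
move=> w_gt0; elim: r n => [|r IH] n; last exact: is_deriveB (IH n.+1) (IH n).
have ln_derive : is_derive (w + n%:R) 1 (@ln R) (w + n%:R)^-1.
  by apply: is_derive1_ln; rewrite ltr_wpDr.
have := @is_derive1_comp R (@ln R) (shift n%:R) w _ _ ln_derive (is_derive_shift _ _ _).
by rewrite mulr1.
Qed.

Lemma fdiff_ln_shift_antitone r n (u v : R) : 0 < u -> u <= v ->
  (-1) ^+ r * fdiff r.+1 (fun i => ln (v + i%:R)) n <=
  (-1) ^+ r * fdiff r.+1 (fun i => ln (u + i%:R)) n.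
Proof.
move=> u_gt0; rewrite le_eqVlt => /predU1P[-> //|uv].
pose F (x : R) : R := (-1) ^+ r * fdiff r.+1 (fun i => ln (x + i%:R)) n.
pose dF (x : R) : R := (-1) ^+ r * fdiff r.+1 (fun i => (x + i%:R)^-1) n.
have F_derive (x : R) : 0 < x -> is_derive x 1 F (dF x).
  by move=> x_gt0; apply: is_deriveZ; exact: is_derive_fdiff_ln_shift.
have F_derivable x : x \in `[u, v] -> derivable F x 1.
  by move=> /[!in_itv] /= /andP[ux _]; have [] := F_derive x (lt_le_trans u_gt0 ux).
have F_derive_in x : x \in `]u, v[ -> is_derive x 1 F (dF x).
  by move=> /[!in_itv] /= /andP[ux _]; exact: F_derive (lt_trans u_gt0 ux).
have [c /[!in_itv] /= /andP[uc _] MVT_eq] :=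
  MVT uv F_derive_in (derivable_within_continuous F_derivable).
have c_gt0 : 0 < c := lt_trans u_gt0 uc.
rewrite -subr_le0 MVT_eq /dF fdiff_inv_shift // exprS mulN1r !mulNr mulrN mulNr.
rewrite -!mulrA signrMK oppr_le0 mulr_ge0 // mulr_ge0 ?subr_ge0 ?ltW //.
by rewrite invr_gt0 prodr_gt0 // => k _; rewrite ltr_wpDr.
Qed.

End ForwardDifference.

Section LogRatio.
Variable R : realType.
Variable z : nat -> R.
Hypothesis z_gt0 : positive_seq z.

Lemma ratio_iter_gt0 r : positive_seq (ratio_iter r z).
Proof.
elim: r => [|r IH] n //.
by rewrite /ratio_iter iterS -/(ratio_iter r z) /ratio_op divr_gt0.
Qed.

Lemma ln_ratio_iter r n : ln (ratio_iter r z n) = fdiff r (fun i => ln (z i)) n.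
Proof.
elim: r n => [|r IH] n //.
rewrite /ratio_iter iterS -/(ratio_iter r z) /ratio_op fdiffS -!IH.
by rewrite ln_div ?posrE ?ratio_iter_gt0.
Qed.

Lemma log_convex_fdiff_ln (x : nat -> R) : positive_seq x ->
  (forall n, 0 <= fdiff 2 (fun i => ln (x i)) n) -> log_convex x.
Proof.
move=> x_gt0 h n; move: (h n); rewrite !fdiffS /fdiff /= => hn.
rewrite -ler_ln ?posrE ?exprn_gt0 ?mulr_gt0 // lnXn // lnM ?posrE //.
lra.
Qed.

Lemma log_concave_fdiff_ln (x : nat -> R) : positive_seq x ->
  (forall n, fdiff 2 (fun i => ln (x i)) n <= 0) -> log_concave x.
Proof.
move=> x_gt0 h n; move: (h n); rewrite !fdiffS /fdiff /= => hn.
rewrite -ler_ln ?posrE ?exprn_gt0 ?mulr_gt0 // lnXn // lnM ?posrE //.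
lra.
Qed.

Lemma infinitely_log_monotonic_fdiff_ln :
  (forall r n, 0 <= (-1) ^+ r * fdiff r.+2 (fun i => ln (z i)) n) ->
  infinitely_log_monotonic z.
Proof.
move=> sign_fdiff k r _.
have fdiff2_ratio n : fdiff 2 (fun i => ln (ratio_iter r z i)) n =
    fdiff r.+2 (fun i => ln (z i)) n.
  by rewrite (eq_fdiff 2 (ln_ratio_iter r)) /fdiff -iterD.
split=> parity.
  apply: log_concave_fdiff_ln (ratio_iter_gt0 r) _ => n.
  by have := sign_fdiff r n; rewrite fdiff2_ratio -signr_odd parity mulN1r oppr_ge0.
apply: log_convex_fdiff_ln (ratio_iter_gt0 r) _ => n.
by have := sign_fdiff r n; rewrite fdiff2_ratio -signr_odd (negbTE parity) mul1r.
Qed.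
End LogRatio.

Lemma exists_max_seq (s : seq nat) :
  s != [::] -> exists2 m, m \in s & all (fun x => x <= m)%N s.
Proof.
elim: s => [//|x s IH] _; have [->|/IH[m ms s_le_m]] := eqVneq s [::].
  by exists x; rewrite ?mem_seq1 //= leqnn.
exists (maxn x m); first by rewrite /maxn; case: ltnP; rewrite inE ?ms ?orbT ?eqxx.
by rewrite /= leq_maxl; apply/allP => y ys; rewrite leq_max (allP s_le_m) ?orbT.
Qed.

Section Majorization.
Variable R : realType.
Variable F : nat -> R.
Hypothesis F_antitone : forall a b, (0 < a)%N -> (a <= b)%N -> F b <= F a.

Lemma sum_antitone_le_count (U V : seq nat) :
  all (fun x => 0 < x)%N U -> size U = size V ->
  (forall t, count (fun x => x <= t)%N V <= count (fun x => x <= t)%N U)%N ->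
  \sum_(x <- V) F x <= \sum_(x <- U) F x.
Proof.
move sizeV : (size V) => n.
elim: n U V sizeV => [|n IH] U V sizeV U_gt0 sizeU count_le.
  by rewrite (size0nil sizeV) (size0nil sizeU) !big_nil.
have [um umU U_le_um] : exists2 m, m \in U & all (fun x => x <= m)%N U.
  by apply: exists_max_seq; rewrite -size_eq0 sizeU.
have [vm vmV V_le_vm] : exists2 m, m \in V & all (fun x => x <= m)%N V.
  by apply: exists_max_seq; rewrite -size_eq0 sizeV.
have U_le_vm : all (fun x => x <= vm)%N U.
  rewrite all_count eqn_leq count_size sizeU -sizeV.
  by move: V_le_vm (count_le vm); rewrite all_count => /eqP ->.
rewrite (big_rem _ umU) (big_rem _ vmV).
rewrite lerD ?F_antitone ?(allP U_gt0) ?(allP U_le_vm) //.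
apply: IH; rewrite ?size_rem ?sizeU ?sizeV //.
  by apply/allP => x /mem_rem; exact: (allP U_gt0).
move=> t; case: (leqP um t) => [um_le_t | t_lt_um].
  have : all (fun x => x <= t)%N (rem um U).
    by apply/allP => x /mem_rem /(allP U_le_um) x_le_um; exact: leq_trans um_le_t.
  rewrite all_count => /eqP ->; rewrite (size_rem umU) sizeU -sizeV -(size_rem vmV).
  exact: count_size.
rewrite !count_rem umU vmV /= (leqNgt um t) t_lt_um subn0.
exact: leq_trans (leq_subr _ _) (count_le t).
Qed.
End Majorization.

Lemma count_iota_mul_le a c t N : (0 < c)%N ->
  count (fun x => x <= t)%N [seq (a + j.+1) * c | j <- iota 0 N]%N = minn (t %/ c - a) N.
Proof.
move=> c_gt0; rewrite count_map.
rewrite (@eq_count _ _ (fun j => j < t %/ c - a)%N); last first.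
  by move=> j /=; rewrite -leq_divRL // ltn_subRL addnS.
elim: N => [|N IH]; first by rewrite minn0.
by rewrite -addn1 iotaD count_cat IH /= add0n addn0; lia.
Qed.

Lemma leq_add_divn_harmonic t d e : (0 < d)%N -> (0 < e)%N ->
  (t %/ ((d + e) * e) + t %/ ((d + e) * d) <= t %/ (d * e))%N.
Proof.
move=> d_gt0 e_gt0; rewrite leq_divRL ?muln_gt0 ?d_gt0 //.
rewrite -(@leq_pmul2r (d + e)) ?addn_gt0 ?d_gt0 //.
have -> : ((t %/ ((d + e) * e) + t %/ ((d + e) * d)) * (d * e) * (d + e) =
    t %/ ((d + e) * e) * ((d + e) * e) * d + t %/ ((d + e) * d) * ((d + e) * d) * e)%N.
  by ring.
by rewrite mulnDr leq_add // leq_mul // leq_divM.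
Qed.

Section LnFactorial.
Variable R : realType.

Lemma ln_factD N m :
  ln ((N + m)`!%:R : R) = ln N`!%:R + \sum_(j <- iota 0 m) ln (N + j.+1)%:R.
Proof.
elim: m => [|m IH]; first by rewrite addn0 big_nil addr0.
rewrite addnS factS natrM lnM ?posrE ?ltr0n ?fact_gt0 // IH.
by rewrite -[m.+1]addn1 iotaD big_cat big_seq1 /= add0n addnS; lra.
Qed.

Lemma ln_binomial N K : (K <= N)%N ->
  ln ('C(N, K)%:R : R) = ln N`!%:R - ln K`!%:R - ln (N - K)`!%:R.
Proof.
move=> K_le_N; rewrite -(bin_fact K_le_N) !natrM.
by rewrite !lnM ?posrE ?mulr_gt0 ?ltr0n ?fact_gt0 ?bin_gt0 //; lra.
Qed.

Lemma sum_ln_natD_scale a c s D i m : (0 < c)%N -> (0 < s)%N -> D = (c * s)%N ->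
  \sum_(j <- iota 0 m) ln ((a + i * c + j.+1)%:R : R) =
  \sum_(j <- iota 0 m) ln c%:R +
  \sum_(x <- [seq (a + j.+1) * s | j <- iota 0 m]%N) ln (x%:R / D%:R + i%:R).
Proof.
move=> c_gt0 s_gt0 ->; rewrite big_map -big_split /=; apply: eq_bigr => j _.
have scaled_gt0 : (0 : R) < ((a + j.+1) * s)%:R / (c * s)%:R + i%:R.
  by rewrite ltr_wpDr //; apply: divr_gt0; rewrite ltr0n muln_gt0 ?addnS ?c_gt0 ?s_gt0.
rewrite -lnM ?posrE ?ltr0n //; congr ln.
rewrite (_ : a + i * c + j.+1 = (a + j.+1) + i * c)%N; last lia.
by rewrite natrD !natrM; field; rewrite !pnatr_eq0 -!lt0n c_gt0 s_gt0.
Qed.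
End LnFactorial.

Section BinomialSequence.
Variable R : realType.
Variables n0 k0 d e : nat.
Hypotheses (d_gt0 : (0 < d)%N) (e_gt0 : (0 < e)%N).
Hypothesis k0_le : (k0 * (d + e) <= n0.+1 * d)%N.
Hypothesis le_k0S : (n0.+1 * d <= k0.+1 * (d + e))%N.

Let k0_le_n0 : (k0 <= n0)%N.
Proof.
rewrite -ltnS -(@ltn_pmul2r (d + e)) ?addn_gt0 ?d_gt0 //.
by apply: leq_ltn_trans k0_le _; rewrite ltn_pmul2l // -[X in (X < _)%N]addn0 ltn_add2l.
Qed.

(* With [D = (d + e) d e], the numbers [x / D + i] for [x] in these lists are the
   factors of [C_(i+1) / C_i] divided by [d + e], by [d] and by [e] respectively. *)
Definition numer_points : seq nat :=
  [seq (n0 + j.+1) * (d * e) | j <- iota 0 (d + e)]%N.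
Definition denom_points : seq nat :=
  [seq (k0 + j.+1) * ((d + e) * e) | j <- iota 0 d]%N ++
  [seq (n0 - k0 + j.+1) * ((d + e) * d) | j <- iota 0 e]%N.

Lemma count_denom_points_le t :
  (count (fun x => x <= t) denom_points <= count (fun x => x <= t) numer_points)%N.
Proof.
rewrite count_cat !count_iota_mul_le ?muln_gt0 ?addn_gt0 ?d_gt0 ?e_gt0 //.
have := leq_add_divn_harmonic t d_gt0 e_gt0.
set A := (t %/ ((d + e) * e))%N; set B := (t %/ ((d + e) * d))%N.
have k0_lt_A : (k0 < A -> n0 - k0 <= B)%N.
  move=> k0_lt_A; rewrite /B leq_divRL ?muln_gt0 ?addn_gt0 ?d_gt0 //.
  apply: leq_trans (leq_divM t ((d + e) * e)); rewrite -/A.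
  apply: leq_trans (leq_mul k0_lt_A (leqnn _)).
  rewrite mulnCA [X in (_ <= X)%N]mulnCA leq_mul2l; apply/orP; right.
  by move: le_k0S; rewrite !mulSn mulnBl !mulnDr; lia.
have n0k0_lt_B : (n0 - k0 < B -> k0 <= A)%N.
  move=> n0k0_lt_B; rewrite /A leq_divRL ?muln_gt0 ?addn_gt0 ?d_gt0 //.
  apply: leq_trans (leq_divM t ((d + e) * d)); rewrite -/B.
  apply: leq_trans (leq_mul n0k0_lt_B (leqnn _)).
  rewrite mulnCA [X in (_ <= X)%N]mulnCA leq_mul2l; apply/orP; right.
  by move: k0_le; rewrite !mulSn mulnBl !mulnDr; lia.
clearbody A B; lia.
Qed.

Definition binomial_seq i : R := 'C(n0 + i * (d + e), k0 + i * d)%:R.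

Let K_le_N i : (k0 + i * d <= n0 + i * (d + e))%N.
Proof. by rewrite leq_add // leq_mul2l leq_addr orbT. Qed.

Lemma binomial_seq_gt0 : positive_seq binomial_seq.
Proof. by move=> i; rewrite ltr0n bin_gt0. Qed.

Let D := ((d + e) * (d * e))%N.

Lemma ln_binomial_seq_increment : exists c : R, forall i,
  forward_diff (fun i => ln (binomial_seq i)) i =
  c + (\sum_(x <- numer_points) ln (x%:R / D%:R + i%:R)
    - \sum_(x <- denom_points) ln (x%:R / D%:R + i%:R)).
Proof.
exists (\sum_(j <- iota 0 (d + e)) ln (d + e)%:R - \sum_(j <- iota 0 d) ln d%:R
  - \sum_(j <- iota 0 e) ln e%:R) => i.
rewrite /forward_diff /binomial_seq !ln_binomial //.
have -> : (n0 + i.+1 * (d + e) = n0 + i * (d + e) + (d + e))%N by rewrite mulSn; lia.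
have -> : (k0 + i.+1 * d = k0 + i * d + d)%N by rewrite mulSn; lia.
have -> : (n0 + i * (d + e) + (d + e) - (k0 + i * d + d) = (n0 - k0) + i * e + e)%N.
  by rewrite mulnDr; lia.
have -> : (n0 + i * (d + e) - (k0 + i * d) = (n0 - k0) + i * e)%N by rewrite mulnDr; lia.
rewrite !ln_factD /denom_points big_cat /=.
have D_k : D = (d * ((d + e) * e))%N by rewrite /D mulnCA.
have D_nk : D = (e * ((d + e) * d))%N by rewrite /D [(d * e)%N]mulnC mulnCA.
have dDe_gt0 : (0 < d + e)%N by rewrite addn_gt0 d_gt0.
rewrite (@sum_ln_natD_scale _ _ _ (d * e)%N D) ?muln_gt0 ?d_gt0 //.
rewrite (@sum_ln_natD_scale _ _ _ ((d + e) * e)%N D) ?muln_gt0 ?dDe_gt0 //.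
rewrite (@sum_ln_natD_scale _ _ _ ((d + e) * d)%N D) ?muln_gt0 ?dDe_gt0 //.
rewrite /numer_points; lra.
Qed.

Lemma binomial_seq_fdiff_ln_sign r n :
  0 <= (-1) ^+ r * fdiff r.+2 (fun i => ln (binomial_seq i)) n.
Proof.
have [c increment] := ln_binomial_seq_increment.
rewrite fdiffSr (eq_fdiff _ increment) fdiff_cstD fdiffB !fdiff_sum mulrBr !mulr_sumr.
rewrite subr_ge0; apply: sum_antitone_le_count.
- move=> a b a_gt0 a_le_b; apply: fdiff_ln_shift_antitone.
    by rewrite divr_gt0 ?ltr0n // /D !muln_gt0 ?addn_gt0 ?d_gt0 ?e_gt0.
  by rewrite ler_pM2r ?invr_gt0 ?ltr0n ?ler_nat // /D !muln_gt0 ?addn_gt0 ?d_gt0 ?e_gt0.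
- by apply/allP => _ /mapP[j _ ->]; rewrite !muln_gt0 addnS d_gt0 e_gt0.
- by rewrite size_cat !size_map !size_iota.
- exact: count_denom_points_le.
Qed.
End BinomialSequence.

Theorem corollary3p3 (R : realType) (n0 k0 Delta delta : nat) :
  (0 < delta)%N -> (delta < Delta)%N ->
  -1 <= (k0%:R : R) - (n0.+1)%:R * delta%:R / Delta%:R <= 0 ->
  positive_seq (fun i : nat => ('C(n0 + i * Delta, k0 + i * delta))%:R : R) /\
  infinitely_log_monotonic
    (fun i : nat => ('C(n0 + i * Delta, k0 + i * delta))%:R : R).
Proof.
move=> delta_gt0 lt_delta /andP[lb ub].
have [e De] : exists e, Delta = (delta + e)%N.
  by exists (Delta - delta)%N; rewrite subnKC // ltnW.
have e_gt0 : (0 < e)%N by move: lt_delta; rewrite De -{1}[delta]addn0 ltn_add2l.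
have Delta_gt0 : (0 : R) < Delta%:R by rewrite ltr0n De addn_gt0 delta_gt0.
have k0_le : (k0 * (delta + e) <= n0.+1 * delta)%N.
  by rewrite -De -(ler_nat R) natrM -ler_pdivlMr // natrM; rewrite subr_le0 in ub.
have le_k0S : (n0.+1 * delta <= k0.+1 * (delta + e))%N.
  rewrite -De -(ler_nat R) !natrM -ler_pdivrMr // -natr1; lra.
subst Delta; split; first exact: binomial_seq_gt0.
apply: infinitely_log_monotonic_fdiff_ln; first exact: binomial_seq_gt0.
exact: binomial_seq_fdiff_ln_sign.
Qed.
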